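(* Let $1<p<\infty$ and let $\mathcal{U}$ be a selective nonprincipal ultrafilter on $\mathbb{N}$. If $(f_n)_{n,\mathcal{U}}$ lies in the range of $R$, then there are $g_1,g_2,\ldots\in L^{p}$ with pairwise disjoint (essential) supports such that $(f_n)_{n,\mathcal{U}}=(g_n)_{n,\mathcal{U}}$.
   Context: $L^{p}=L^{p}([0,1],\mu)$, $\mu$ Lebesgue measure. $(L^{p})^{\mathcal{U}}$ is the ultrapower of $L^p$, $(f_n)_{n,\mathcal{U}}$ the class of a bounded sequence. $R:(L^{p})^{\mathcal{U}}\to(L^{p})^{\mathcal{U}}$ is the projection $R[(f_n)_{n,\mathcal{U}}]=\lim_{r\to\infty}(f_nI(|f_n|>r))_{n,\mathcal{U}}$ (norm limit, which exists), $I(|f|>r)$ the indicator of $\{|f|>r\}$. An ultrafilter $\mathcal{U}$ on $\mathbb{N}$ is selective if (1) for every sequence $A_1,A_2,\dots$ in $\mathcal{U}$ there is $A\in\mathcal{U}$ with $A\setminus A_k$ finite for each $k$; and (2) for every partition of $\mathbb{N}$ into finite sets $A_1,A_2,\dots$ there is $A\in\mathcal{U}$ with $A\cap A_k$ a singleton for each $k$. *)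

From HB Require Import structures.
From mathcomp Require Import all_boot all_order all_algebra.
From mathcomp Require Import all_classical all_reals all_analysis.
Set Implicit Arguments. Unset Strict Implicit. Unset Printing Implicit Defensive.
Import Order.TTheory GRing.Theory Num.Theory.
Local Open Scope classical_set_scope.
Local Open Scope ring_scope.

Definition is_ultrafilter (U : set (set nat)) : Prop :=
  [/\ U setT, ~ U set0,
      (forall A B, U A -> A `<=` B -> U B),
      (forall A B, U A -> U B -> U (A `&` B)) &
      (forall A, U A \/ U (~` A))].

Definition nonprincipal (U : set (set nat)) : Prop :=
  forall A : set nat, finite_set A -> ~ U A.

(** Selective ultrafilter, conditions (1) and (2) of the paper.
    A partition of nat into finite sets: pairwise disjoint, nonempty,
    finite blocks covering nat (necessarily countably many). *)
Definition selective (U : set (set nat)) : Prop :=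
  is_ultrafilter U /\
  (forall A : nat -> set nat, (forall k, U (A k)) ->
     exists2 B, U B & forall k, finite_set (B `\` A k)) /\
  (forall A : nat -> set nat,
     (forall k l, k <> l -> A k `&` A l = set0) ->
     (forall k, A k !=set0) ->
     (forall k, finite_set (A k)) ->
     \bigcup_k A k = setT ->
     exists2 B, U B & forall k, exists x, B `&` A k = [set x]).

Section Lp.
Variable R : realType.
Notation mu := (@lebesgue_measure R).
Definition I01 : set R := `[(0:R)%R, 1%R].

Definition inLp (p : R) (f : R -> R) : Prop :=
  measurable_fun I01 f /\
  (\int[mu]_(x in I01) ((`|f x| `^ p)%:E) < +oo)%E.

Definition Lpnorm (p : R) (f : R -> R) : R :=
  (fine (\int[mu]_(x in I01) ((`|f x| `^ p)%:E))) `^ p^-1.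

(** A bounded sequence in L^p (a representative of an element of the ultrapower). *)
Definition bdd_Lp_seq (p : R) (f : nat -> R -> R) : Prop :=
  (forall n, inLp p (f n)) /\ exists M : R, forall n, Lpnorm p (f n) <= M.

(** Equality of classes in the ultrapower: lim_U ||f_n - g_n||_p = 0. *)
Definition ueq (U : set (set nat)) (p : R) (f g : nat -> R -> R) : Prop :=
  forall eps : R, 0 < eps -> U [set n | Lpnorm p (f n \- g n) < eps].

Definition trunc_above (r : R) (f : R -> R) : R -> R :=
  fun x => if r < `|f x| then f x else 0.

(** (f_n)_U = R[(h_n)_U], i.e. (f_n)_U is the norm limit as r -> oo of
    (h_n I(|h_n|>r))_U in the ultrapower. *)
Definition is_R_image (U : set (set nat)) (p : R) (h f : nat -> R -> R) : Prop :=
  forall eps : R, 0 < eps -> exists r0 : R, forall r : R, r0 <= r ->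
    U [set n | Lpnorm p (f n \- trunc_above r (h n)) < eps].

Definition in_range_R (U : set (set nat)) (p : R) (f : nat -> R -> R) : Prop :=
  exists2 h, bdd_Lp_seq p h & is_R_image U p h f.

Definition disjoint_supports (g : nat -> R -> R) : Prop :=
  forall m n, m <> n ->
    mu (I01 `&` [set x | g m x <> 0 /\ g n x <> 0]) = 0%E.
End Lp.

From HB Require Import structures.
From mathcomp Require Import all_boot all_order all_algebra.
From mathcomp Require Import all_classical all_reals all_analysis measurable_realfun.
From mathcomp Require Import zify.
Import Order.TTheory GRing.Theory Num.Theory.
Set Implicit Arguments. Unset Strict Implicit. Unset Printing Implicit Defensive.
Local Open Scope classical_set_scope.
Local Open Scope ring_scope.

(* Choose radii r_i at which truncation is 1/(i+1)-close to f along U and the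
   tail sets {|h_n| > r_i} have measure at most 2^-(i+1) uniformly in n
   (Chebyshev).  Selectivity (1) turns the sets of good indices into a
   diagonal index k_n -> oo with f_n 1/(k_n+1)-close to the truncation of h_n
   at r_(k_n); selectivity (2) thins the index set until k grows so fast that
   the union E_n of all later tail sets has measure small enough for the L^p
   norm of h_n on E_n to be below 1/(k_n+1) (absolute continuity of the
   integral).  Then g_n, the truncation of h_n with E_n removed, is
   2/(k_n+1)-close to f_n, and the g_n have disjoint supports because every
   later tail set lies in E_n. *)

Section Ultrafilter.
Variable U : set (set nat).
Hypothesis hU : is_ultrafilter U.

Lemma ultrafilterS A B : A `<=` B -> U A -> U B.
Proof. by case: hU => _ _ hS _ _ AB UA; exact: hS UA AB. Qed.

Lemma ultrafilterI A B : U A -> U B -> U (A `&` B).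
Proof. by case: hU => _ _ _ hI _; exact: hI. Qed.

Lemma ultrafilter_bigI (D : nat -> set nat) : (forall i, U (D i)) ->
  forall K, U [set n | forall i, (i <= K)%N -> D i n].
Proof.
move=> UD; elim=> [|K IH].
  by apply: ultrafilterS (UD 0%N) => n Dn i; rewrite leqn0 => /eqP ->.
apply: ultrafilterS (ultrafilterI IH (UD K.+1)) => n [Dn DSn] i.
by rewrite leq_eqVlt ltnS => /orP[/eqP ->|/Dn].
Qed.

Lemma nonprincipal_ge (hnp : nonprincipal U) N : U [set m | (N <= m)%N].
Proof.
case: hU => _ _ _ _ /(_ [set m | (N <= m)%N]) [//|UC]; exfalso.
apply: hnp UC; apply: sub_finite_set (finite_II N) => m /= /negP.
by rewrite -ltnNge.
Qed.

End Ultrafilter.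

Lemma finite_nat_bounded (A : set nat) : finite_set A ->
  exists N, forall m, A m -> (m < N)%N.
Proof.
move=> /finite_fsetP[X ->]; exists (\max_(x <- finmap.enum_fset X) x).+1 => m Xm.
by rewrite ltnS (@leq_bigmax_seq _ _ xpredT id).
Qed.

Lemma interval_blocks_cover (a : nat -> nat) :
  a 0%N = 0%N -> {homo a : i j / (i < j)%N} ->
  forall n, exists i, (a i <= n < a i.+1)%N.
Proof.
move=> a0 a_incr; elim=> [|n [i /andP[ain nai]]].
  by exists 0%N; rewrite {1}a0 leqnn /= -{1}a0; apply: a_incr.
have [nSai|aiSn] := ltnP n.+1 (a i.+1); first by exists i; rewrite nSai ltnW.
exists i.+1; rewrite aiSn /=.
exact: leq_ltn_trans nai (a_incr _ _ (ltnSn _)).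
Qed.

Lemma interval_block_le (a : nat -> nat) : {homo a : i j / (i <= j)%N} ->
  forall i l j m, (a i <= j < a i.+1)%N -> (a l <= m < a l.+1)%N ->
  (j <= m)%N -> (i <= l)%N.
Proof.
move=> a_mono i l j m /andP[aij _] /andP[_ mal] jm; rewrite leqNgt; apply/negP.
by move=> /a_mono; lia.
Qed.

Section Selective.
Variable U : set (set nat).
Hypothesis hs : selective U.

Let hU : is_ultrafilter U. Proof. by case: hs. Qed.

(* One point per block [a i, a i.+1), all in blocks of the same parity:
   consecutive chosen points are then separated by a whole block. *)
Lemma selective_interval_gaps (a : nat -> nat) :
  a 0%N = 0%N -> {homo a : i j / (i < j)%N} ->
  exists2 B, U B & forall j m, B j -> B m -> (j < m)%N ->
    exists i, (j < a i.+1)%N /\ (a i.+2 <= m)%N.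
Proof.
move=> a0 a_incr; have a_mono := ltnW_homo a_incr.
pose A i := [set n | (a i <= n < a i.+1)%N].
have /choice[blk blkP] := interval_blocks_cover a0 a_incr.
have blk_le j m : (j <= m)%N -> (blk j <= blk m)%N.
  exact: interval_block_le a_mono _ _ _ _ (blkP j) (blkP m).
have blk_uniq i n : A i n -> blk n = i.
  move=> Ain; apply/anti_leq.
  by rewrite (interval_block_le a_mono (blkP n) Ain) ?(interval_block_le a_mono Ain (blkP n)).
have [B1 UB1 B1A] : exists2 B1, U B1 & forall i, exists x, B1 `&` A i = [set x].
  case: hs => _ [_]; apply.
  - move=> i l il; apply/seteqP; split => // n [Ain Aln].
    by apply: il; rewrite -(blk_uniq _ _ Ain) -(blk_uniq _ _ Aln).
  - by move=> i; exists (a i); rewrite /A /= leqnn a_incr.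
  - by move=> i; apply: sub_finite_set (finite_II (a i.+1)) => n /andP[].
  - by apply/seteqP; split => // n _; exists (blk n) => //; exact: blkP.
have [B2 UB2 B2par] : exists2 B2, U B2 &
    forall j m, B2 j -> B2 m -> odd (blk j) = odd (blk m).
  case: hU => _ _ _ _ /(_ [set n | odd (blk n)]) [UO|UE].
    by exists [set n | odd (blk n)] => // j m /= -> ->.
  by exists (~` [set n | odd (blk n)]) => // j m /= /negP/negbTE -> /negP/negbTE ->.
exists (B1 `&` B2) => [|j m [B1j B2j] [B1m B2m] jm]; first exact: ultrafilterI.
have blk_neq : blk j != blk m.
  apply/eqP => ejm; have [x B1Ax] := B1A (blk j).
  have : (B1 `&` A (blk j)) m by rewrite ejm; split => //; exact: blkP.
  have : (B1 `&` A (blk j)) j by split => //; exact: blkP.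
  by rewrite B1Ax => /= jx mx; move: jm; rewrite jx mx ltnn.
have blk_gap : ((blk j).+2 <= blk m)%N.
  have := blk_le _ _ (ltnW jm); rewrite leq_eqVlt (negbTE blk_neq) /=.
  rewrite leq_eqVlt => /orP[/eqP eSm|//].
  by have := B2par _ _ B2j B2m; rewrite -eSm /=; case: (odd _).
exists (blk j); split; first by case/andP: (blkP j).
by apply: leq_trans (a_mono _ _ blk_gap) _; case/andP: (blkP m).
Qed.

Lemma selective_sparse (phi : nat -> nat) :
  exists2 B, U B & forall j m, B j -> B m -> (j < m)%N -> (phi j <= m)%N.
Proof.
pose Phi n := \max_(j < n) phi j.
have Phi_ge j n : (j < n)%N -> (phi j <= Phi n)%N.
  by move=> jn; exact: (@leq_bigmax _ (fun j : 'I_n => phi j) (Ordinal jn)).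
pose a := fix a i := if i is i'.+1 then maxn (a i').+1 (Phi (a i')) else 0%N.
have a_incr : {homo a : i j / (i < j)%N}.
  by apply: homo_ltn => [i j k|i]; [exact: ltn_trans|rewrite /= leq_max leqnn].
have [B UB Bgap] := selective_interval_gaps (erefl : a 0%N = 0%N) a_incr.
exists B => // j m Bj Bm jm; have [i [jai aim]] := Bgap j m Bj Bm jm.
apply: leq_trans (Phi_ge _ _ jai) (leq_trans _ aim).
by rewrite [a i.+2]/= leq_max leqnn orbT.
Qed.

(* Selectivity (1) yields a pseudo-intersection of the D i; along it, the
   largest K <= m with m in D 0, ..., D K tends to infinity. *)
Lemma selective_diagonal (D : nat -> set nat) : (forall i, U (D i)) ->
  exists k : nat -> nat, exists2 B, U B &
    (forall m, B m -> forall i, (i <= k m)%N -> D i m) /\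
    (forall K, exists N, forall m, (N <= m)%N -> B m -> (K <= k m)%N).
Proof.
move=> UD; pose G K := [set n | forall i, (i <= K)%N -> D i n].
have [B1 UB1 B1G] : exists2 B1, U B1 & forall K, finite_set (B1 `\` G K).
  by case: hs => _ [+ _]; apply; exact: ultrafilter_bigI.
pose P m : pred nat := fun K => (K <= m)%N && ((K == 0)%N || `[< G K m >]).
have Pex m : exists K, P m K by exists 0%N.
have Pub m K : P m K -> (K <= m)%N by case/andP.
pose k m := ex_maxn (Pex m) (Pub m).
have kP m : P m (k m) /\ forall K, P m K -> (K <= k m)%N.
  by rewrite /k; case: ex_maxnP.
exists k, (B1 `&` G 0%N); first exact: ultrafilterI (ultrafilter_bigI hU UD 0%N).
split=> [m [_ G0m]|K].
  case/andP: (kP m).1 => _ /orP[/eqP ->|/asboolP //].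
  by move=> i /G0m.
have [N BN] := finite_nat_bounded (B1G K); exists (maxn N K) => m.
rewrite geq_max => /andP[Nm Km] [B1m _]; apply: (kP m).2.
rewrite /P Km /=; apply/orP; right; apply/asboolP.
by apply: contrapT => GKm; have := BN m (conj B1m GKm); rewrite ltnNge Nm.
Qed.

Lemma selective_sparse_along (k : nat -> nat) (B0 : set nat) (KK : nat -> nat) :
  U B0 -> (forall K, exists N, forall m, (N <= m)%N -> B0 m -> (K <= k m)%N) ->
  exists2 B, U B /\ B `<=` B0 &
    forall j m, B j -> B m -> (j < m)%N -> (KK j <= k m)%N.
Proof.
move=> UB0 /choice[N kN]; have [B1 UB1 B1sparse] := selective_sparse (N \o KK).
exists (B0 `&` B1) => [|j m [_ B1j] [B0m B1m] jm].
  by split; [exact: ultrafilterI|move=> ? []].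
exact: kN (B1sparse _ _ B1j B1m jm) B0m.
Qed.

End Selective.

(* By injectivity, for each i at most one S m has k m = K + i, and its
   measure is at most 2^-(K+i+1); summing over i gives 2^-K. *)
Lemma measure_bigcup_pow2 d (T : measurableType d) (R : realType)
    (mu : {measure set T -> \bar R}) (S : nat -> set T) (k : nat -> nat)
    (C : set nat) (K : nat) :
  (forall m, measurable (S m)) ->
  (forall m1 m2, C m1 -> C m2 -> k m1 = k m2 -> m1 = m2) ->
  (forall m, C m -> (K <= k m)%N) ->
  (forall m, C m -> (mu (S m) <= ((2 ^ (k m).+1)%:R^-1)%:E)%E) ->
  (mu (\bigcup_(m in C) S m) <= ((2 ^ K)%:R^-1)%:E)%E.
Proof.
move=> mS k_inj Kk muS.
pose Z i := \bigcup_(m in [set m | C m /\ k m = (i + K)%N]) S m.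
have mZ i : measurable (Z i) by apply: bigcup_measurable => m _; exact: mS.
have CZ : \bigcup_(m in C) S m `<=` \bigcup_i Z i.
  move=> x [m Cm Smx]; exists (k m - K)%N => //; exists m => //.
  by split => //; rewrite subnK // Kk.
set e := (2 ^ K)%:R^-1 : R.
have muZ i : (mu (Z i) <= (e / (2 ^ i.+1)%:R)%:E)%E.
  have [[m0 [Cm0 km0]]|noZ] := pselect (exists m, C m /\ k m = (i + K)%N).
    have Zsub : Z i `<=` S m0.
      by move=> x [m [Cm km] Smx]; rewrite -(k_inj m m0 Cm Cm0) ?km.
    apply: le_trans (le_measure _ (mem_set (mZ i)) (mem_set (mS m0)) Zsub) _.
    apply: le_trans (muS _ Cm0) _; rewrite km0 /e -invfM -natrM -expnD.
    by rewrite addnC addnS.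
  suff -> : Z i = set0 by rewrite measure0 lee_fin divr_ge0 ?invr_ge0.
  by apply/seteqP; split => // x [m Zm _]; apply: noZ; exists m.
apply: le_trans (measure_sigma_subadditive mu mZ (bigcup_measurable _) CZ) _.
  by move=> m _; exact: mS.
apply: le_trans (epsilon_trick0 xpredT _); last by rewrite invr_ge0.
by apply: lee_nneseries => i _ //; exact: muZ.
Qed.

Section Lp.
Variables (R : realType) (p : R).
Hypothesis hp : 1 < p.
Local Notation mu := (@lebesgue_measure R).
Local Notation I01 := (@I01 R).

Let p_gt0 : 0 < p. Proof. exact: lt_trans hp. Qed.
Let p_neq0 : p != 0. Proof. by rewrite gt_eqF. Qed.
Let powRpK x : 0 <= x -> (x `^ p) `^ p^-1 = x.
Proof. by move=> x0; rewrite -powRrM mulfV // powRr1. Qed.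

Let measurable_I01 : measurable I01. Proof. exact: measurable_itv. Qed.

(* Like [u \_ D], but with value 0 rather than [point] outside D. *)
Definition restrict0 (D : set R) (u : R -> R) : R -> R := patch (fun=> 0) D u.

Definition Lpint (u : R -> R) : \bar R := (\int[mu]_(x in I01) (`|u x| `^ p)%:E)%E.

Lemma Lpint_ge0 (u : R -> R) : (0 <= Lpint u)%E.
Proof. by apply: integral_ge0 => x _; rewrite lee_fin powR_ge0. Qed.

Lemma Lpint_fin_num (u : R -> R) : inLp p u -> Lpint u \is a fin_num.
Proof. by case=> _ Iu; rewrite ge0_fin_numE ?Lpint_ge0. Qed.

Lemma Lpnorm_ge0 (u : R -> R) : 0 <= Lpnorm p u.
Proof. exact: powR_ge0. Qed.

Lemma fine_Lpint (u : R -> R) : fine (Lpint u) = Lpnorm p u `^ p.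
Proof.
by rewrite -powRrM mulVf // powRr1 // fine_ge0 // Lpint_ge0.
Qed.

Lemma measurable_powp_norm (u : R -> R) : measurable_fun I01 u ->
  measurable_fun I01 (fun x => (`|u x| `^ p)%:E).
Proof.
move=> mu_; apply/measurable_EFinP.
apply: (measurableT_comp (measurable_powR p)).
exact: (measurableT_comp (@normr_measurable R setT) mu_).
Qed.

Lemma Lpint_le (u v : R -> R) : measurable_fun I01 u -> measurable_fun I01 v ->
  (forall x, I01 x -> `|u x| <= `|v x|) -> (Lpint u <= Lpint v)%E.
Proof.
move=> mu_ mv uv; apply: ge0_le_integral.
- exact: measurable_I01.
- by move=> x _; rewrite lee_fin powR_ge0.
- exact: measurable_powp_norm.
- exact: measurable_powp_norm.
- move=> x Ix; rewrite lee_fin; apply: ge0_ler_powR; rewrite ?nnegrE //.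
  + exact: ltW.
  + exact: uv.
Qed.

Lemma Lpnorm_eq (u v : R -> R) : {in I01, u =1 v} -> Lpnorm p u = Lpnorm p v.
Proof. by move=> uv; congr (fine _ `^ _); apply: eq_integral => x /uv ->. Qed.

Lemma inLp_le (u v : R -> R) : measurable_fun I01 u -> inLp p v ->
  (forall x, I01 x -> `|u x| <= `|v x|) -> inLp p u.
Proof.
by move=> mu_ [mv Iv] uv; split=> //; apply: le_lt_trans (Lpint_le mu_ mv uv) Iv.
Qed.

Lemma Lpnorm_le (u v : R -> R) : measurable_fun I01 u -> inLp p v ->
  (forall x, I01 x -> `|u x| <= `|v x|) -> Lpnorm p u <= Lpnorm p v.
Proof.
move=> mu_ Lv uv; have Lu := inLp_le mu_ Lv uv.
apply: ge0_ler_powR; rewrite ?nnegrE ?fine_ge0 ?Lpint_ge0 //.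
  by rewrite invr_ge0 ltW.
apply: fine_le; rewrite ?Lpint_fin_num //.
by apply: Lpint_le => //; case: Lv.
Qed.

Lemma Lnorm_restrict0_I01 (u : R -> R) :
  ('N[mu]_p%:E[EFin \o restrict0 I01 u] = (Lpint u) `^ p^-1)%E.
Proof.
rewrite unlock /Lpint [in RHS]integral_mkcond; congr (_ `^ _)%E.
apply: eq_integral => x _ /=; rewrite /restrict0 /patch.
by case: ifP => _; rewrite ?normr0 ?powR0.
Qed.

Lemma powR_Lpint_add_le (u v : R -> R) : inLp p u -> inLp p v ->
  (Lpint (u \+ v)%R `^ p^-1 <= (Lpnorm p u + Lpnorm p v)%:E)%E.
Proof.
move=> Lu Lv; have mr (w : R -> R) : inLp p w -> measurable_fun setT (restrict0 I01 w).
  by case=> mw _; exact/(measurable_restrictT _ measurable_I01).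
have := minkowski_EFin mu (mr _ Lu) (mr _ Lv) (ltW hp).
have -> : (restrict0 I01 u \+ restrict0 I01 v)%R = restrict0 I01 (u \+ v).
  by apply/funext => x; rewrite /restrict0 /patch /=; case: ifP; rewrite ?addr0.
rewrite !Lnorm_restrict0_I01 -(fineK (Lpint_fin_num Lu)).
by rewrite -(fineK (Lpint_fin_num Lv)) !poweR_EFin.
Qed.

Lemma inLpD (u v : R -> R) : inLp p u -> inLp p v -> inLp p (u \+ v).
Proof.
move=> Lu Lv; split; first by apply: measurable_funD; [case: Lu|case: Lv].
have := powR_Lpint_add_le Lu Lv; rewrite /Lpint ltNge leye_eq.
apply: contraL => /eqP ->.
by rewrite poweRyr ?invr_neq0 // leye_eq.
Qed.

Lemma Lpnorm_add_le (u v : R -> R) : inLp p u -> inLp p v ->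
  Lpnorm p (u \+ v) <= Lpnorm p u + Lpnorm p v.
Proof.
move=> Lu Lv; have := powR_Lpint_add_le Lu Lv.
by rewrite -(fineK (Lpint_fin_num (inLpD Lu Lv))) poweR_EFin lee_fin.
Qed.

Lemma inLpN (u : R -> R) : inLp p u -> inLp p (\- u).
Proof.
case=> mu_ Iu; split; first exact: measurable_funN.
rewrite (_ : (\int[mu]_(x in I01) _)%E = Lpint u) //.
by apply: eq_integral => x _; rewrite normrN.
Qed.

Lemma Lpnorm_sub_le (u v w : R -> R) : inLp p u -> inLp p v -> inLp p w ->
  Lpnorm p (u \- w) <= Lpnorm p (u \- v) + Lpnorm p (v \- w).
Proof.
move=> Lu Lv Lw; have Luv := inLpD Lu (inLpN Lv); have Lvw := inLpD Lv (inLpN Lw).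
have -> : (u \- w)%R = ((u \- v) \+ (v \- w))%R.
  by apply/funext => x /=; rewrite addrA subrK.
exact: Lpnorm_add_le.
Qed.

Lemma measurable_tail (h : R -> R) (r : R) : measurable_fun I01 h ->
  measurable (I01 `&` [set x | r < `|h x|]).
Proof.
move=> mh; have mnh := measurableT_comp (@normr_measurable R setT) mh.
have -> : [set x | r < `|h x|] = (fun x => `|h x|) @^-1` `]r, +oo[%classic.
  by apply/seteqP; split => x /=; rewrite in_itv /= andbT.
exact: mnh.
Qed.

Lemma Lpint_tail_ge (h : R -> R) (r : R) : measurable_fun I01 h -> 0 < r ->
  ((r `^ p)%:E * mu (I01 `&` [set x | (r < `|h x|)%R]) <= Lpint h)%E.
Proof.
move=> mh r0; have mS := measurable_tail r mh.
set S := I01 `&` _ in mS *.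
have mi : measurable_fun I01 (EFin \o (\1_S : R -> R)).
  by apply/measurable_EFinP; exact: measurable_indic.
have -> : mu S = (\int[mu]_(x in I01) (\1_S x)%:E)%E.
  by rewrite integral_indic // setIidl // => x [].
have i0 x : I01 x -> (0 <= (EFin \o (\1_S : R -> R)) x)%E.
  by rewrite lee_fin indicE.
rewrite -(ge0_integralZl_EFin mu measurable_I01 i0 mi (powR_ge0 r p)).
apply: ge0_le_integral => //.
- by move=> x _; rewrite mule_ge0 // lee_fin ?powR_ge0 // indicE.
- by apply: emeasurable_funM => //; exact: measurable_cst.
- exact: measurable_powp_norm.
move=> x Ix /=; rewrite indicE; case: (boolP (x \in S)) => [/set_mem[_ /= rh]|_].
  by rewrite mule1 lee_fin; apply: ge0_ler_powR; rewrite ?nnegrE //; exact: ltW.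
by rewrite /= mule0 lee_fin powR_ge0.
Qed.

Lemma Lp_bounded_tail_small (h : nat -> R -> R) (M eps r0 : R) :
  (forall n, inLp p (h n)) -> (forall n, Lpnorm p (h n) <= M) -> 0 < eps ->
  exists2 r, r0 <= r &
    forall n, (mu (I01 `&` [set x | (r < `|h n x|)%R]) <= eps%:E)%E.
Proof.
move=> Lh hM eps0; set q := M `^ p.
have Lpint_le_q n : (Lpint (h n) <= q%:E)%E.
  rewrite -(fineK (Lpint_fin_num (Lh n))) lee_fin fine_Lpint.
  apply: ge0_ler_powR; rewrite ?nnegrE ?Lpnorm_ge0 //; first exact: ltW.
  exact: le_trans (Lpnorm_ge0 (h 0%N)) (hM 0%N).
exists (Num.max (Num.max r0 1) (q / eps + 1)); first by rewrite !le_max lexx.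
move=> n; set r := Num.max _ _.
have r1 : 1 <= r by rewrite !le_max lexx orbT.
have r_gt0 : 0 < r `^ p by rewrite powR_gt0 // (lt_le_trans ltr01).
have q_lt : q / eps < r `^ p.
  apply: (lt_le_trans (_ : q / eps < q / eps + 1)); first by rewrite ltrDl.
  apply: (le_trans (_ : _ <= r)); first by rewrite le_max lexx orbT.
  by rewrite -{1}(powRr1 (le_trans ler01 r1)) ler_powR // ltW.
have := le_trans (Lpint_tail_ge (proj1 (Lh n)) (lt_le_trans ltr01 r1)) (Lpint_le_q n).
rewrite -lee_pdivlMl // => /le_trans; apply.
rewrite -EFinM lee_fin mulrC ler_pdivrMr //.
by move: q_lt; rewrite ltr_pdivrMr // mulrC => /ltW.
Qed.

Lemma Lpnorm_restrict0_small (h : R -> R) (e : R) : inLp p h -> 0 < e ->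
  exists2 d, 0 < d & forall E, measurable E -> (mu E < d%:E)%E ->
    Lpnorm p (restrict0 E h) < e.
Proof.
move=> [mh Ih] e0; pose F := restrict0 I01 (fun x => `|h x| `^ p).
have mF : measurable_fun setT F.
  apply/(measurable_restrictT _ measurable_I01).
  apply: (measurableT_comp (measurable_powR p)).
  exact: (measurableT_comp (@normr_measurable R setT) mh).
have intF E : measurable E ->
    (\int[mu]_(x in E) (`|F x|)%:E)%E = Lpint (restrict0 E h).
  move=> mE; rewrite integral_mkcond /Lpint [in RHS]integral_mkcond.
  apply: eq_integral => x _; rewrite /patch /F /restrict0 /patch.
  case: (boolP (x \in E)) => xE; case: (boolP (x \in I01)) => xI //=.
  - by rewrite ger0_norm // powR_ge0.
  - by rewrite normr0.
  - by rewrite normr0 powR0.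
have iF : mu.-integrable setT (EFin \o F).
  apply/integrableP; split; first exact/measurable_EFinP.
  rewrite intF //; apply: le_lt_trans Ih; rewrite le_eqVlt; apply/orP; left.
  by apply/eqP; apply: eq_integral => x _; rewrite /restrict0 /patch in_setT.
have ep : 0 < e `^ p by rewrite powR_gt0.
have [d [d0 small]] := integral_normr_continuous iF ep.
exists d => // E mE muE; have := small E mE muE.
rewrite /Rintegral intF // fine_Lpint => /(@gt0_ltr_powR _ p^-1).
by rewrite invr_gt0 !nnegrE !powR_ge0 !powRpK ?Lpnorm_ge0 ?(ltW e0) //; apply.
Qed.

Lemma Lpnorm_restrict0_small_pow2 (h : R -> R) (e : R) (K0 : nat) :
  inLp p h -> 0 < e ->
  exists K, (K0 < K)%N /\ forall E, measurable E ->
    (mu E <= ((2 ^ K)%:R^-1)%:E)%E -> Lpnorm p (restrict0 E h) < e.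
Proof.
move=> Lh e0; have [d d0 small] := Lpnorm_restrict0_small Lh e0.
exists (maxn K0.+1 (Num.Def.trunc d^-1).+1); split; first by rewrite leq_max leqnn.
move=> E mE muE; apply: small => //; apply: le_lt_trans muE _; rewrite lte_fin.
rewrite invf_plt ?posrE ?ltr0n ?expn_gt0 //.
apply: lt_le_trans (truncnS_gt _) _; rewrite ler_nat.
apply: leq_trans (leq_maxr K0.+1 _) _; exact: ltnW (ltn_expl _ (ltnSn 1)).
Qed.

Lemma measurable_restrict0 (D : set R) (u : R -> R) : measurable D ->
  measurable_fun I01 u -> measurable_fun I01 (restrict0 D u).
Proof.
move=> mD mu_; apply/(measurable_restrict _ mD measurable_I01).
exact: measurable_funS mu_.
Qed.

End Lp.

Section Disjointify.
Variables (R : realType) (p : R) (h : nat -> R -> R) (r : nat -> R) (B : set nat).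
Local Notation I01 := (@I01 R).

Definition tail_set n := I01 `&` [set x | r n < `|h n x|].

Definition tail_union n := \bigcup_(m in [set m | B m /\ (n < m)%N]) tail_set m.

Definition disjointify n : R -> R :=
  if `[< B n >] then h n \* \1_(tail_set n `\` tail_union n) else cst 0.

Lemma disjointify_neq0 n x : disjointify n x != 0 ->
  [/\ B n, tail_set n x & ~ tail_union n x].
Proof.
rewrite /disjointify; case: asboolP => [Bn|_]; last by rewrite eqxx.
by rewrite /= indicE; case: (boolP (x \in _)) => [/set_mem[]|] //; rewrite mulr0 eqxx.
Qed.

Lemma disjoint_supports_disjointify : disjoint_supports disjointify.
Proof.
move=> m n mn.
suff -> : I01 `&` [set x | disjointify m x <> 0 /\ disjointify n x <> 0] = set0.
  exact: measure0.
apply/seteqP; split => // x [_ [/eqP/disjointify_neq0[Bm Smx Umx]]].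
move=> /eqP/disjointify_neq0[Bn Snx Unx]; rewrite /tail_union in Umx Unx; case: (ltngtP m n) => [mn'|nm|emn].
- by apply: Umx; exists n.
- by apply: Unx; exists m.
- exact: mn emn.
Qed.

Lemma normr_disjointify_le n x : `|disjointify n x| <= `|h n x|.
Proof.
rewrite /disjointify; case: asboolP => _ /=; last by rewrite normr0.
by rewrite indicE normrM; case: (_ \in _); rewrite /= ?normr1 ?normr0 ?mulr1 ?mulr0.
Qed.

Lemma in_tail_set n x : I01 x -> (x \in tail_set n) = (r n < `|h n x|).
Proof. by move=> Ix; apply/idP/idP => [/set_mem[] //|rh]; apply/mem_set. Qed.

Lemma trunc_above_sub_disjointify_le n x : B n -> I01 x ->
  `|trunc_above (r n) (h n) x - disjointify n x|
    <= `|restrict0 (tail_union n) (h n) x|.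
Proof.
move=> Bn Ix; rewrite /disjointify asboolT // /trunc_above /restrict0 /patch /=.
rewrite indicE in_setD in_tail_set //.
case: (x \in tail_union n); case: (r n < _); rewrite /= ?mulr1 ?mulr0 ?subr0 ?subrr //.
by rewrite normr0.
Qed.

Hypothesis Lh : forall n, inLp p (h n).

Let mh n : measurable_fun I01 (h n). Proof. by case: (Lh n). Qed.

Lemma measurable_tail_union n : measurable (tail_union n).
Proof. by apply: bigcup_measurable => m _; exact: measurable_tail. Qed.

Lemma measurable_disjointify n : measurable_fun I01 (disjointify n).
Proof.
rewrite /disjointify; case: asboolP => _; last exact: measurable_cst.
apply: measurable_funM; first exact: mh.
apply: measurable_indic; apply: measurableD; first exact: measurable_tail.
exact: measurable_tail_union.
Qed.

Lemma measure_tail_union_le (k KK : nat -> nat) n :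
  (forall m, (lebesgue_measure (tail_set m) <= ((2 ^ (k m).+1)%:R^-1)%:E)%E) ->
  (forall m, (k m < KK m)%N) ->
  (forall j m, B j -> B m -> (j < m)%N -> (KK j <= k m)%N) -> B n ->
  (lebesgue_measure (tail_union n) <= ((2 ^ KK n)%:R^-1)%:E)%E.
Proof.
move=> mu_tail kKK spread Bn; apply: (measure_bigcup_pow2 (k := k)) => [m|m1 m2|m|m _] //.
- exact: measurable_tail.
- move=> [Bm1 _] [Bm2 _] km; have := kKK m1; have := kKK m2.
  by case: (ltngtP m1 m2) => [/(spread _ _ Bm1 Bm2)|/(spread _ _ Bm2 Bm1)|]; lia.
- by case=> Bm nm; exact: spread.
- exact: mu_tail.
Qed.

Hypothesis hp : 1 < p.

Lemma inLp_disjointify n : inLp p (disjointify n).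
Proof.
by apply: (inLp_le hp (measurable_disjointify n) (Lh n)) => x _; exact: normr_disjointify_le.
Qed.

Lemma Lpnorm_disjointify_le n : Lpnorm p (disjointify n) <= Lpnorm p (h n).
Proof.
by apply: (Lpnorm_le hp (measurable_disjointify n) (Lh n)) => x _; exact: normr_disjointify_le.
Qed.

Lemma Lpnorm_sub_disjointify_le (f : R -> R) n : B n -> inLp p f ->
  Lpnorm p (f \- disjointify n) <= Lpnorm p (f \- trunc_above (r n) (h n))
    + Lpnorm p (restrict0 (tail_union n) (h n)).
Proof.
move=> Bn Lf; pose T := h n \* \1_(tail_set n).
have mT : measurable_fun I01 T.
  apply: measurable_funM => //; apply: measurable_indic; exact: measurable_tail.
have LT : inLp p T.
  apply: (inLp_le hp mT (Lh n)) => x _; rewrite /T /= indicE normrM.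
  by case: (_ \in _); rewrite /= ?normr1 ?normr0 ?mulr1 ?mulr0.
have TE : {in I01, T =1 trunc_above (r n) (h n)}.
  move=> x /set_mem Ix; rewrite /T /trunc_above /= indicE in_tail_set //.
  by case: (_ < _); rewrite /= ?mulr1 ?mulr0.
apply: le_trans (Lpnorm_sub_le hp Lf LT (inLp_disjointify n)) _.
rewrite (@Lpnorm_eq _ _ (f \- T)%R (f \- trunc_above (r n) (h n))%R); last first.
  by move=> x Ix /=; rewrite TE.
have mU := measurable_tail_union n.
have LU : inLp p (restrict0 (tail_union n) (h n)).
  apply: (inLp_le hp (measurable_restrict0 mU (mh n)) (Lh n)) => x _.
  by rewrite /restrict0 /patch; case: ifP; rewrite ?normr0.
rewrite lerD2l; apply: (Lpnorm_le hp _ LU).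
  by apply: measurable_funB => //; exact: measurable_disjointify.
by move=> x Ix; rewrite /= TE ?inE //; exact: trunc_above_sub_disjointify_le.
Qed.

End Disjointify.

Lemma R_image_radius (R : realType) (p : R) (U : set (set nat))
    (h f : nat -> R -> R) (e c : R) :
  1 < p -> bdd_Lp_seq p h -> is_R_image U p h f -> 0 < e -> 0 < c ->
  exists r, U [set n | Lpnorm p (f n \- trunc_above r (h n)) < e] /\
    forall n, (lebesgue_measure (@I01 R `&` [set x | (r < `|h n x|)%R]) <= c%:E)%E.
Proof.
move=> hp [Lh [M hM]] hR e_gt0 c_gt0; have [r0 hr0] := hR _ e_gt0.
have [r r0r tail] := Lp_bounded_tail_small hp r0 Lh hM c_gt0.
by exists r; split => //; exact: hr0.
Qed.

Lemma ueq_of_Lpnorm_lt (R : realType) (p : R) (U : set (set nat))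
    (f g : nat -> R -> R) (k : nat -> nat) (B : set nat) :
  is_ultrafilter U -> nonprincipal U -> U B ->
  (forall K, exists N, forall m, (N <= m)%N -> B m -> (K <= k m)%N) ->
  (forall n, B n -> Lpnorm p (f n \- g n) < 2 / (k n).+1%:R) -> ueq U p f g.
Proof.
move=> hU hnp UB kB fg eps eps0; have [N kN] := kB (Num.Def.trunc (2 / eps)).
apply: (ultrafilterS hU _ (ultrafilterI hU UB (nonprincipal_ge hU hnp N))).
move=> n [Bn Nn]; apply: lt_le_trans (fg n Bn) _.
rewrite ler_pdivrMr // mulrC -ler_pdivrMr //; apply/ltW/(lt_le_trans (truncnS_gt _)).
by rewrite ler_nat ltnS kN.
Qed.

Theorem lemma3p2 (R : realType) (p : R) (U : set (set nat))
  (f : nat -> R -> R) :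
  1 < p -> selective U -> nonprincipal U ->
  bdd_Lp_seq p f -> in_range_R U p f ->
  exists g : nat -> R -> R,
    [/\ bdd_Lp_seq p g, disjoint_supports g & ueq U p f g].
Proof.
move=> hp hs hnp [Lf _] [h [Lh [M hM]] hR].
have hU : is_ultrafilter U by case: hs.
have e_gt0 i : 0 < i.+1%:R^-1 :> R by rewrite invr_gt0.
have c_gt0 i : 0 < (2 ^ i.+1)%:R^-1 :> R by rewrite invr_gt0 ltr0n expn_gt0.
have /choice[r hr] := fun i =>
  R_image_radius hp (conj Lh (ex_intro _ M hM)) hR (e_gt0 i) (c_gt0 i).
have [k [B0 UB0 [B0D kB0]]] := selective_diagonal hs (fun i => (hr i).1).
have /choice[KK hKK] := fun n =>
  Lpnorm_restrict0_small_pow2 hp (k n) (Lh n) (e_gt0 (k n)).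
have [B [UB BB0] spread] := selective_sparse_along hs KK UB0 kB0.
have kB K : exists N, forall m, (N <= m)%N -> B m -> (K <= k m)%N.
  by have [N kN] := kB0 K; exists N => m Nm /BB0; exact: kN.
exists (disjointify h (r \o k) B); split.
- split; first exact: inLp_disjointify.
  by exists M => n; apply: le_trans (hM n); exact: Lpnorm_disjointify_le.
- exact: disjoint_supports_disjointify.
apply: (ueq_of_Lpnorm_lt hU hnp UB kB) => n Bn.
apply: le_lt_trans (Lpnorm_sub_disjointify_le _ Lh hp Bn (Lf n)) _.
rewrite mulr_natl mulr2n ltrD ?(B0D n (BB0 _ Bn)) //; apply: (hKK n).2.
  exact: measurable_tail_union.
apply: (measure_tail_union_le Lh (k := k) (KK := KK)) => // m;
  [exact: (hr (k m)).2|exact: (hKK m).1].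
Qed.
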